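(* Let $\Gamma$ be an extended Dynkin graph with standard integral Cartan matrix, and let $v\in\mathbb{R}^I$ be any configuration. Suppose that it is possible, beginning with $v$, to fire $r$ vertices (counted with multiplicity) of amplitude $<-1$ successively until there are no vertices of amplitude $<-1$ left. Consider any other sequence, beginning with $v$, of firings of $s$ vertices of amplitude $<-1$. Then $s\le r$, and this sequence can be extended to a sequence of $r$ firings of vertices of amplitude $<-1$ which terminates at the same configuration as the first sequence.
   Context: $\Gamma$ is an extended Dynkin graph (Dynkin diagram of an affine Weyl group) with vertex set $I$ and standard integral generalized Cartan matrix $C=(c_{ij})$. Configurations are $v\in\mathbb{R}^I$. Firing vertex $i$ replaces $v$ by $f_i(v)$, where $f_i(v)_i=-v_i$, $f_i(v)_j=v_j-c_{ij}v_i$ if $j$ is adjacent to $i$, and $f_i(v)_j=v_j$ otherwise. ''Firing a vertex of amplitude $<-1$'' means firing $i$ when the current value $v_i$ satisfies $v_i<-1$. *)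

From HB Require Import structures.
From mathcomp Require Import all_boot all_order all_algebra.
From mathcomp Require Import reals.
Set Implicit Arguments. Unset Strict Implicit. Unset Printing Implicit Defensive.
Import Order.TTheory GRing.Theory Num.Theory.
Local Open Scope ring_scope.

(** * Affine (extended) Dynkin diagrams of affine Weyl groups (Kac's Table Aff 1),
    vertex 0 being the extra (affine) vertex.  An edge (a, b, cab, cba) records
    the Cartan entries c_ab and c_ba. *)
Inductive afftype : Type :=
| AffA of nat
| AffB of nat
| AffC of nat
| AffD of nat
| AffE6 | AffE7 | AffE8 | AffF4 | AffG2.

Definition aff_valid (t : afftype) : bool :=
  match t with
  | AffA l => (1 <= l)%N | AffB l => (3 <= l)%N
  | AffC l => (2 <= l)%N | AffD l => (4 <= l)%N
  | _ => true
  end.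

Definition aff_size (t : afftype) : nat :=
  match t with
  | AffA l | AffB l | AffC l | AffD l => l.+1
  | AffE6 => 7 | AffE7 => 8 | AffE8 => 9 | AffF4 => 5 | AffG2 => 3
  end.

Definition sedge (a b : nat) : nat * nat * int * int := (a, b, -1, -1).
Definition chain (m n : nat) := [seq sedge k k.+1 | k <- iota m (n - m)].

Definition aff_edges (t : afftype) : seq (nat * nat * int * int) :=
  match t with
  | AffA l => if l == 1%N then [:: (0%N, 1%N, -2, -2)]
              else chain 0 l ++ [:: sedge l 0]
  | AffB l => sedge 0 2 :: chain 1 l.-1 ++ [:: (l.-1, l, -2, -1)]
  | AffC l => (0%N, 1%N, -1, -2) :: chain 1 l.-1 ++ [:: (l.-1, l, -2, -1)]
  | AffD l => sedge 0 2 :: sedge 1 2 :: chain 2 l.-1 ++ [:: sedge l.-2 l]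
  | AffE6 => [:: sedge 1 2; sedge 2 3; sedge 3 4; sedge 4 5; sedge 3 6; sedge 6 0]
  | AffE7 => chain 0 6 ++ [:: sedge 3 7]
  | AffE8 => chain 0 7 ++ [:: sedge 5 8]
  | AffF4 => [:: sedge 0 1; sedge 1 2; (2%N, 3%N, -2, -1); sedge 3 4]
  | AffG2 => [:: sedge 0 1; (1%N, 2%N, -3, -1)]
  end.

Definition aff_cartan (t : afftype) (i j : nat) : int :=
  if i == j then 2 else
  foldr (fun e r => let: (a, b, cab, cba) := e in
           if (a == i) && (b == j) then cab
           else if (b == i) && (a == j) then cba else r) 0 (aff_edges t).

(** Since the convention for the
    direction of arrows (c_ij vs c_ji) is not fixed, both the matrix and its transpose
    are allowed. *)
Definition extended_dynkin (I : finType) (C : I -> I -> int) : Prop :=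
  exists t : afftype, aff_valid t /\
  exists sigma : I -> 'I_(aff_size t), bijective sigma /\
    ((forall i j, C i j = aff_cartan t (sigma i) (sigma j)) \/
     (forall i j, C i j = aff_cartan t (sigma j) (sigma i))).

Section Game.
Variables (R : realType) (I : finType) (C : I -> I -> int).

Definition fire (i : I) (v : I -> R) : I -> R :=
  fun j => if j == i then - v i else v j - (C i j)%:~R * v i.

Definition run (v : I -> R) (s : seq I) : I -> R := foldl (fun w i => fire i w) v s.

Fixpoint legal (v : I -> R) (s : seq I) : bool :=
  if s is i :: s' then (v i < -1) && legal (fire i v) s' else true.

Definition terminal (v : I -> R) : Prop := forall i, ~ (v i < -1).
End Game.

From HB Require Import structures.
From mathcomp Require Import all_boot all_order all_algebra.
From mathcomp Require Import reals boolp.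
From mathcomp Require Import ring lra.
Set Implicit Arguments.
Unset Strict Implicit.
Unset Printing Implicit Defensive.
Import Order.TTheory GRing.Theory Num.Theory.
Local Open Scope ring_scope.

(* Local confluence: two distinct vertices i, j of amplitude < -1 span a rank-2
   subgraph, which in an extended Dynkin graph has type A1 x A1, A2, B2, G2 or
   the affine A~1.  In the four finite types, firing i, j, i, ... and j, i, j, ...
   for m = 2, 3, 4, 6 steps is legal and ends at the same configuration (the
   braid relation of the rank-2 Weyl group); in type A~1 alternate firing is
   legal forever, which cannot happen below a terminating sequence.  Induction
   on the length of the terminating sequence, as in Newman's lemma, then shows
   that every legal sequence can be completed to one reaching the same end. *)

(* Triples (c_ij, c_ji, m) for the finite rank-2 types, m being the order of s_i s_j. *)
Definition finite_rank2 : seq (int * int * nat) :=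
  [:: (0, 0, 2%N); (-1, -1, 3%N); (-1, -2, 4%N); (-2, -1, 4%N);
      (-1, -3, 6%N); (-3, -1, 6%N)].

Definition rank2_cartan_pair (p : int * int) : bool :=
  (p == (-2, -2)) || has (fun q => q.1 == p) finite_rank2.

Definition cartan_edge_ok (e : nat * nat * int * int) : bool :=
  let: (_, _, cab, cba) := e in
  rank2_cartan_pair (cab, cba) && rank2_cartan_pair (cba, cab).

Lemma aff_edges_ok t : all cartan_edge_ok (aff_edges t).
Proof.
have chain_ok s : all cartan_edge_ok [seq sedge k k.+1 | k <- s].
  by rewrite all_map; apply/allP.
by case: t => [[|[|l]]|l|l|l| | | | |] //=; rewrite ?all_cat ?chain_ok //=.
Qed.

Lemma aff_cartan_rank2 t (a b : nat) :
  a != b -> rank2_cartan_pair (aff_cartan t a b, aff_cartan t b a).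
Proof.
move=> ab; rewrite /aff_cartan (negbTE ab) eq_sym (negbTE ab).
elim: (aff_edges t) (aff_edges_ok t) => [//|[[[x y] cxy] cyx] es IH] /=.
case/andP => /andP[xy yx] /IH{}IH.
rewrite [(x == b) && _]andbC [(y == b) && _]andbC.
case: ifP => [/andP[/eqP -> /eqP ->]|_]; last by case: ifP.
by rewrite [b == a]eq_sym andbb (negbTE ab).
Qed.

Lemma extended_dynkin_rank2 (I : finType) (C : I -> I -> int) :
  extended_dynkin C -> forall i j, i != j -> rank2_cartan_pair (C i j, C j i).
Proof.
case=> t [_ [sigma [sigma_bij hC]]] i j ij.
have sij : nat_of_ord (sigma i) != sigma j.
  by apply: contra ij => /eqP/val_inj/(bij_inj sigma_bij) ->.
case: hC => eqC; rewrite !eqC; first exact: aff_cartan_rank2.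
by apply: aff_cartan_rank2; rewrite eq_sym.
Qed.

Section NumbersGame.
Variables (R : realType) (I : finType) (C : I -> I -> int).

Lemma legal_cat (v : I -> R) s t :
  legal C v (s ++ t) = legal C v s && legal C (run C v s) t.
Proof. by elim: s v => [//|i s IH] v /=; rewrite IH andbA. Qed.

Lemma run_cat (v : I -> R) s t : run C v (s ++ t) = run C (run C v s) t.
Proof. by rewrite /run foldl_cat. Qed.

Fixpoint alternating (i j : I) (n : nat) : seq I :=
  if n is n'.+1 then i :: alternating j i n' else [::].

Lemma size_alternating i j n : size (alternating i j n) = n.
Proof. by elim: n i j => [//|n IH] i j /=; rewrite IH. Qed.

Definition braid_relation (v : I -> R) (i j : I) (m : nat) :=
  [/\ (0 < m)%N, legal C v (alternating i j m), legal C v (alternating j i m)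
    & run C v (alternating i j m) = run C v (alternating j i m)].

Definition locally_confluent (v : I -> R) (i j : I) :=
  (exists m, braid_relation v i j m) \/ (forall n, legal C v (alternating i j n)).

Definition confluent_from (v : I -> R) (s1 : seq I) :=
  forall s2, legal C v s2 ->
    (size s2 <= size s1)%N /\
    exists s3, [/\ legal C v (s2 ++ s3), size (s2 ++ s3) = size s1
                 & run C v (s2 ++ s3) = run C v s1].

Section LocalToGlobal.
Hypothesis local : forall (v : I -> R) i j,
  i != j -> v i < -1 -> v j < -1 -> locally_confluent v i j.

Definition confluent_at_length (r : nat) := forall (v : I -> R) s,
  size s = r -> legal C v s -> terminal (run C v s) -> confluent_from v s.

Lemma swap_first_move {r} {v : I -> R} {i j t} :
  confluent_at_length r -> size t = r -> legal C (fire C i v) t ->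
  terminal (run C (fire C i v) t) -> v i < -1 -> v j < -1 ->
  exists t', [/\ legal C (fire C j v) t', size t' = r
               & run C (fire C j v) t' = run C (fire C i v) t].
Proof.
move=> IH size_t legal_t term_t vi vj.
have [<-|ij] := eqVneq i j; first by exists t; split.
case: (local ij vi vj) => [[m []]|unbounded].
  case: m => [//|m] _ /= /andP[_ li] /andP[_ lj] eq_run.
  have [_ [u [lu su ru]]] := IH _ _ size_t legal_t term_t _ li.
  exists (alternating i j m ++ u); split.
  - by rewrite legal_cat lj -eq_run; move: lu; rewrite legal_cat => /andP[].
  - by rewrite -size_t -su !size_cat !size_alternating.
  - by rewrite run_cat -eq_run -run_cat.
move/(_ r.+2)/andP: unbounded => [_ li].
have [] := IH _ _ size_t legal_t term_t (alternating j i r.+1) li.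
by rewrite size_alternating size_t ltnn.
Qed.

Lemma confluent_terminating r : confluent_at_length r.
Proof.
elim: r => [|r IH] v [|i t] //= size_t legal_t term_t [|j u] /=.
- by move=> _; split => //; exists [::].
- by case/andP => /term_t.
- by move=> _; split => //; exists (i :: t).
case: size_t legal_t => size_t /andP[vi legal_t] /andP[vj lu].
have [t' [legal_t' size_t' run_t']] := swap_first_move IH size_t legal_t term_t vi vj.
have term_t' : terminal (run C (fire C j v) t') by rewrite run_t'.
have [su [w [lw sw rw]]] := IH _ _ size_t' legal_t' term_t' _ lu.
by split; [rewrite size_t -size_t' | exists w; rewrite /= vj lw sw rw run_t' size_t' size_t].
Qed.

End LocalToGlobal.

Lemma finite_rank2_braid (v : I -> R) i j m :
  i != j -> v i < -1 -> v j < -1 -> (C i j, C j i, m) \in finite_rank2 ->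
  braid_relation v i j m.
Proof.
move=> ij vi vj; have ji : j != i by rewrite eq_sym.
rewrite !inE; repeat case/orP; move=> /eqP[cij cji ->].
all: split=> //; rewrite /run /= /fire ?eqxx ?(negbTE ij) ?(negbTE ji) /= ?cij ?cji.
all: lazymatch goal with
  | |- _ = _ =>
      apply/funext => k; have [->|ki] := eqVneq k i;
      last have [->|kj] := eqVneq k j;
      rewrite ?eqxx ?(negbTE ij) ?(negbTE ji) ?(negbTE ki) ?(negbTE kj) ?cij ?cji;
      ring
  | _ => rewrite ?andbT; repeat (apply/andP; split); lra
  end.
Qed.

Lemma affine_A1_alternating_legal n (v : I -> R) i j :
  i != j -> C i j = -2 -> C j i = -2 -> v i < -1 -> v i + v j < 0 ->
  legal C v (alternating i j n).
Proof.
(* Firing i preserves v i + v j and makes v j + 2 v i < -1 the new amplitude of j. *)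
elim: n i j v => [//|n IH] i j v ij cij cji vi sum_neg /=.
rewrite vi; apply: IH => //; first by rewrite eq_sym.
all: rewrite /fire ?eqxx [j == i]eq_sym (negbTE ij) cij; lra.
Qed.

Lemma locally_confluent_rank2 (v : I -> R) i j :
  i != j -> v i < -1 -> v j < -1 -> rank2_cartan_pair (C i j, C j i) ->
  locally_confluent v i j.
Proof.
move=> ij vi vj; case/orP => [/eqP[cij cji]|/hasP[[p m] p_m /eqP p_eq]].
  by right=> n; apply: affine_A1_alternating_legal => //; lra.
by left; exists m; apply: finite_rank2_braid; rewrite // -p_eq.
Qed.

End NumbersGame.

Theorem lemma3p4 (R : realType) (I : finType) (C : I -> I -> int)
  (hC : extended_dynkin C) (v : I -> R) (s1 : seq I) :
  legal C v s1 -> terminal (run C v s1) ->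
  forall s2 : seq I, legal C v s2 ->
    (size s2 <= size s1)%N /\
    exists s3 : seq I, [/\ legal C v (s2 ++ s3), size (s2 ++ s3) = size s1
                         & run C v (s2 ++ s3) = run C v s1].
Proof.
move=> legal_s1 terminal_s1.
have local (w : I -> R) i j : i != j -> w i < -1 -> w j < -1 -> locally_confluent C w i j.
  by move=> ij wi wj; apply: locally_confluent_rank2 => //; exact: extended_dynkin_rank2.
exact: (confluent_terminating local (erefl (size s1)) legal_s1 terminal_s1).
Qed.
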